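(* Suppose Assumption (A-1) below holds. Let $S_n=-\frac{2}{n(n-1)}X^\top\xi$, where $\xi=2r-(n+1)e_n$ and $r$ is uniformly distributed over all permutations of $(1,\dots,n)$. Then for every $t>0$, $$\Pr\big(\Psi^d(S_n)\ge t\big)\le 2p\exp\Big(-\frac{nt^2}{32 b_1^2c_p^2}\Big).$$
   Context: $X\in\mathbb{R}^{n\times p}$ has rows $X_1^\top,\dots,X_n^\top$, $n\ge2$; $\beta^*\in\mathbb{R}^p$ is fixed. $[p]$ is partitioned into nonempty disjoint groups $\mathcal{G}_1,\dots,\mathcal{G}_g$ with weights $w_l>0$; $\Psi(\beta)=\sum_lw_l\|\beta_{\mathcal{G}_l}\|_2$, $\Psi^d(v)=\max_l\|v_{\mathcal{G}_l}\|_2/w_l$, $c_p=\max_lw_l^{-1}\sqrt{|\mathcal{G}_l|}$. $\mathcal{A}_0=\{l:\mathcal{G}_l\cap\{j:\beta^*_j\neq0\}\neq\emptyset\}$, $\Omega=\bigcup_{l\in\mathcal{A}_0}\mathcal{G}_l$, $\bar\Omega=[p]\setminus\Omega$, $\Psi_\Omega(\gamma)=\Psi(\mathcal{P}_\Omega\gamma)$, $\Psi_{\bar\Omega}(\gamma)=\Psi(\mathcal{P}_{\bar\Omega}\gamma)$ ($\mathcal{P}_\Omega$ zeroes coordinates outside $\Omega$). For a given $c_0>1$, $\bar c=1+\frac{c_0+1}{c_0-1}$. (A-1) $\sum_iX_i=0$; $|X_{ij}|\le b_1$ for all $i,j$, for a constant $b_1>0$; and there is $b_2>0$ with $\gamma^\top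 X^\top X\gamma/(n\|\gamma\|_2^2)\ge b_2$ for all nonzero $\gamma$ with $\Psi_{\bar\Omega}(\gamma)\le(\bar c-1)\Psi_\Omega(\gamma)$. *)

From HB Require Import structures.
From mathcomp Require Import all_boot all_order fingroup perm all_algebra.
From mathcomp Require Import reals.
From mathcomp Require Import sequences.
Set Implicit Arguments. Unset Strict Implicit. Unset Printing Implicit Defensive.
Import Order.TTheory GRing.Theory Num.Theory.
Local Open Scope ring_scope.

Section Defs.
Variables (R : realType) (p g : nat).
(* grp j = index l of the group G_l containing coordinate j; w l = weight w_l *)
Variables (grp : 'I_p -> 'I_g) (w : 'I_g -> R).

Definition gnorm (v : 'I_p -> R) (l : 'I_g) : R :=
  Num.sqrt (\sum_(j < p | grp j == l) v j ^+ 2).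

Definition Psi (v : 'I_p -> R) : R := \sum_(l < g) w l * gnorm v l.

(* Psi^d(v) = max_l || v_{G_l} ||_2 / w_l  (values are >= 0, so 0 is a neutral bottom) *)
Definition Psid (v : 'I_p -> R) : R := \big[Num.max/0]_(l < g) (gnorm v l / w l).

Definition cp : R :=
  \big[Num.max/0]_(l < g) ((w l)^-1 * Num.sqrt (#|[set j | grp j == l]|%:R)).

Definition Omega (bstar : 'I_p -> R) : {set 'I_p} :=
  [set j | [exists k : 'I_p, (grp k == grp j) && (bstar k != 0)]].

Definition proj (A : {set 'I_p}) (v : 'I_p -> R) : 'I_p -> R :=
  fun j => if j \in A then v j else 0.

Definition PsiOmega bstar v := Psi (proj (Omega bstar) v).
Definition PsiOmegaBar bstar v := Psi (proj (~: Omega bstar) v).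

Definition cbar (c0 : R) : R := 1 + (c0 + 1) / (c0 - 1).
End Defs.

Definition assumption_A1 (R : realType) (n p g : nat) (X : 'M[R]_(n, p))
    (grp : 'I_p -> 'I_g) (w : 'I_g -> R) (bstar : 'I_p -> R) (c0 b1 b2 : R) : Prop :=
  [/\ forall j : 'I_p, \sum_(i < n) X i j = 0,
      forall (i : 'I_n) (j : 'I_p), `|X i j| <= b1 &
      forall gam : 'I_p -> R, (exists j, gam j != 0) ->
        PsiOmegaBar grp w bstar gam <= (cbar c0 - 1) * PsiOmega grp w bstar gam ->
        b2 <= (\sum_(i < n) (\sum_(j < p) X i j * gam j) ^+ 2)
              / (n%:R * \sum_(j < p) gam j ^+ 2)].

(* xi = 2 r - (n+1) e_n, where r_i = sigma(i) + 1 is the permutation of (1,...,n) *)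
Definition xi (R : realType) (n : nat) (s : 'S_n) (i : 'I_n) : R :=
  2 * ((s i)%:R + 1) - (n%:R + 1).

Definition Sn (R : realType) (n p : nat) (X : 'M[R]_(n, p)) (s : 'S_n) (j : 'I_p) : R :=
  - (2 / (n%:R * (n%:R - 1))) * \sum_(i < n) X i j * xi R s i.

Definition perm_prob (n : nat) (R : realType) (E : pred 'S_n) : R :=
  #|[set s : 'S_n | E s]|%:R / (n`!)%:R.

From Pilot Require Import Defs.
From HB Require Import structures.
From mathcomp Require Import all_boot all_order fingroup perm all_algebra.
From mathcomp Require Import reals sequences.
From mathcomp Require Import boolp functions topology normedtype exp.
From mathcomp Require Import zify ring lra.
Import Order.TTheory GRing.Theory Num.Theory numFieldNormedType.Exports.
Local Open Scope ring_scope.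
Set Implicit Arguments. Unset Strict Implicit. Unset Printing Implicit Defensive.

(** Each column of [X] sums to zero, so [Sn X s = - 4 / (n (n - 1)) * X^T s] where
    [s i] is the 0-based rank of [i], and [Psid v <= cp * max_j |v_j|]. Hence the event
    [t <= Psid (Sn X s)] forces [lam <= |sum_i X_ij s(i)|] for some column [j], and a
    union bound over the [p] columns and the two signs reduces the claim to a Chernoff
    bound for a single linear rank statistic [sum_i a_i s(i)] with [sum_i a_i = 0] and
    [|a_i| <= b].  Its moment generating function is bounded by induction on the size:
    conditioning on the index [j] that receives rank 0 leaves a uniform permutation of
    the other indices with ranks shifted by one, and the resulting average over [j] of a
    centred family of exponentials is controlled by Hoeffding's lemma (convexity of
    [exp] and [cosh x <= exp (x^2 / 2)]).  This gives the sub-Gaussian bound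
    [E exp (h T) <= exp (h^2 b^2 n (n - 1)^2 / 2)], and optimizing [h] yields the
    exponent [- n t^2 / (32 b^2 cp^2)]. *)

Lemma expn2_fact_leq_fact_double m : (2 ^ m * m`! <= (2 * m)`!)%N.
Proof.
elim: m => // m IH.
have -> : (2 * m.+1 = (2 * m).+2)%N by lia.
rewrite !factS expnS; move: IH.
set A := (2 ^ m)%N; set B := m`!; set C := (2 * m)`!; nia.
Qed.

Section ExpBounds.
Variable R : realType.
Implicit Types x y M : R.

Lemma exp_coeff_sym_ge0 x k : 0 <= exp_coeff x k + exp_coeff (- x) k.
Proof.
rewrite /exp_coeff /= -mulrDl mulr_ge0 ?invr_ge0 ?ler0n // exprNn -signr_odd.
case/boolP: (odd k) => [_|k_even]; first by rewrite expr1 mulN1r subrr.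
by rewrite expr0 mul1r -mulr2n mulrn_wge0 // exprn_even_ge0.
Qed.

Lemma exp_coeff_sym_pair_le x m :
  \sum_(2 * m <= k < (2 * m).+2) (exp_coeff x k + exp_coeff (- x) k)
  <= 2 * exp_coeff (x ^+ 2 / 2) m.
Proof.
rewrite !big_nat_recl // big_geq // addr0 /exp_coeff /=.
have even_pow : (- x) ^+ (2 * m) = x ^+ (2 * m) by rewrite !exprM sqrrN.
have odd_pow : (- x) ^+ (2 * m).+1 = - x ^+ (2 * m).+1 by rewrite !exprS even_pow mulNr.
rewrite even_pow odd_pow mulNr addrN addr0 -mulr2n -[X in X <= _]mulr_natl.
have pow_ge0 : 0 <= x ^+ (2 * m) by rewrite exprM exprn_ge0 ?sqr_ge0.
rewrite ler_pM2l // expr_div_n -exprM -mulrA ler_wpM2l // -invfM.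
rewrite lef_pV2 ?posrE ?mulr_gt0 ?exprn_gt0 ?ltr0n ?fact_gt0 //.
by rewrite -natrX -natrM ler_nat expn2_fact_leq_fact_double.
Qed.

Lemma expR_add_expRN_le x : expR x + expR (- x) <= 2 * expR (x ^+ 2 / 2).
Proof.
pose u k := \sum_(0 <= i < k) (exp_coeff x i + exp_coeff (- x) i).
pose v : nat -> R := series (exp_coeff (x ^+ 2 / 2)).
have u_even_le m : u (2 * m)%N <= v m + v m.
  elim: m => [|m IH]; first by rewrite /u /v muln0 /series /= !big_geq // addr0.
  rewrite /u /v mulnS seriesSr (@big_cat_nat _ _ _ (2 * m)) ?leq_addl //=.
  by move: IH (exp_coeff_sym_pair_le x m); rewrite /u /v; lra.
have u_nondecr : nondecreasing_seq u.
  by apply/nondecreasing_seqP => k; rewrite /u big_nat_recr //= lerDl exp_coeff_sym_ge0.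
have u_series : u = series (exp_coeff x) + series (exp_coeff (- x)).
  by apply/funext => k; rewrite /u big_split.
have lim_u : limn u = expR x + expR (- x).
  by rewrite u_series /expR limD //; apply: is_cvg_series_exp_coeff.
have lim_v : limn (v + v) = 2 * expR (x ^+ 2 / 2).
  by rewrite limD ?mulr_natl ?mulr2n //; apply: is_cvg_series_exp_coeff.
rewrite -lim_u -lim_v; apply: ler_lim.
- by rewrite u_series; apply: is_cvgD; apply: is_cvg_series_exp_coeff.
- by apply: is_cvgD; apply: is_cvg_series_exp_coeff.
- near=> k; apply: le_trans (u_even_le k); apply: u_nondecr.
  by rewrite leq_pmull.
Unshelve. all: by end_near.
Qed.

Lemma expR_le_chord M y : `|y| <= M ->
  2 * M * expR y <= (M - y) * expR (- M) + (M + y) * expR M.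
Proof.
rewrite ler_norml => /andP[My yM].
have tangent z : expR y * (1 + (z - y)) <= expR z.
  have -> : expR z = expR y * expR (z - y) by rewrite -expRD addrC subrK.
  by rewrite ler_wpM2l ?expR_ge0 ?expR_ge1Dx.
have lo : (M - y) * (expR y * (1 + (- M - y))) <= (M - y) * expR (- M).
  by rewrite ler_wpM2l ?tangent //; lra.
have hi : (M + y) * (expR y * (1 + (M - y))) <= (M + y) * expR M.
  by rewrite ler_wpM2l ?tangent //; lra.
lra.
Qed.

Lemma sum_expR_centered_le N (y : 'I_N -> R) M :
  (forall j, `|y j| <= M) -> \sum_j y j = 0 ->
  \sum_j expR (y j) <= N%:R * expR (M ^+ 2 / 2).
Proof.
move=> y_le_M sum_y0.
have [M_le0 | M_gt0] := lerP M 0.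
  have y0 j : y j = 0 by apply/normr0_eq0/le_anti; rewrite normr_ge0 (le_trans (y_le_M j)).
  under eq_bigr do rewrite y0 expR0.
  rewrite sumr_const card_ord -[X in X <= _]mulr1 ler_wpM2l ?ler0n //.
  by rewrite (le_trans _ (expR_ge1Dx _)) // lerDl divr_ge0 ?sqr_ge0.
have chord_sum : 2 * M * \sum_j expR (y j) <= N%:R * M * (expR (- M) + expR M).
  rewrite mulr_sumr (le_trans (ler_sum _ (fun j _ => expR_le_chord (y_le_M j)))) //.
  rewrite big_split /= -!mulr_suml sumrB big_split /= sum_y0 !sumr_const card_ord.
  by rewrite subr0 addr0 -mulr_natr; lra.
rewrite -(ler_pM2l (_ : 0 < 2 * M)) ?mulr_gt0 //; apply: le_trans chord_sum _.
rewrite [X in _ <= X](_ : _ = N%:R * M * (2 * expR (M ^+ 2 / 2))); last by ring.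
by rewrite ler_wpM2l ?mulr_ge0 ?ler0n ?(ltW M_gt0) // addrC expR_add_expRN_le.
Qed.

Lemma card_tail_le_sum_expR (T : finType) (F : T -> R) lam h : 0 <= h ->
  #|[set s | lam <= F s]|%:R <= \sum_s expR (h * (F s - lam)).
Proof.
move=> h_ge0; rewrite -sum1_card natr_sum big_mkcond /=.
apply: ler_sum => s _; rewrite inE; case: ifP => [lam_le_F | _]; last exact: expR_ge0.
by rewrite (le_trans _ (expR_ge1Dx _)) // lerDl mulr_ge0 // subr_ge0.
Qed.
End ExpBounds.

Lemma card_bigcup_le (I T : finType) (A : I -> {set T}) :
  (#|\bigcup_i A i| <= \sum_i #|A i|)%N.
Proof.
elim/big_rec2: _ => [|i n U _ le_U_n]; first by rewrite cards0.
by rewrite (leq_trans (leq_card_setU _ U).1) ?leq_add2l.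
Qed.

Lemma sum_perm_lift (V : nmodType) N (F : 'S_N.+1 -> V) :
  \sum_s F s = \sum_(j < N.+1) \sum_(s : 'S_N) F (lift_perm j ord0 s).
Proof.
rewrite (partition_big (fun s : 'S_N.+1 => s^-1%g ord0) predT) //=.
apply: eq_bigr => j _; rewrite (eq_bigl (fun s : 'S_N.+1 => s j == ord0)); last first.
  by move=> s; rewrite -(inj_eq (@perm_inj _ s)) permKV eq_sym.
rewrite (reindex (lift_perm j ord0)) /=; last first.
  (* [ulsf j s] is [s] with [j] and [s j] deleted, inverting [lift_perm j ord0]. *)
  pose ulsf i (s : 'S_N.+1) k := odflt k (unlift (s i) (s (lift i k))).
  have ulsfK i (s : 'S_N.+1) k : lift (s i) (ulsf i s k) = s (lift i k).
    rewrite /ulsf; have := neq_lift i k.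
    by rewrite -(can_eq (permK s)) => /unlift_some[] ? ? ->.
  have inj_ulsf : injective (ulsf j _).
    move=> s; apply: can_inj (ulsf (s j) s^-1%g) _ => k.
    by rewrite {1}/ulsf ulsfK !permK liftK.
  exists (fun s => perm (inj_ulsf s)) => [s _ | s].
    by apply/permP => k; rewrite permE /ulsf lift_perm_lift lift_perm_id liftK.
  move/eqP => sj0; apply/permP => k.
  case: (unliftP j k) => [k'|] ->; rewrite ?lift_perm_id //.
  by rewrite lift_perm_lift -sj0 permE ulsfK.
by apply: eq_bigl => s; rewrite lift_perm_id eqxx.
Qed.

Section RankStatistic.
Variable R : realType.

(* Ranks are 0-based: [s i] is [r_i - 1] in the paper's notation. *)
Definition rank_stat N (a : 'I_N -> R) (s : 'S_N) : R := \sum_i a i * (s i)%:R.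

Definition perm_mgf N (a : 'I_N -> R) (h : R) : R :=
  \sum_(s : 'S_N) expR (h * rank_stat a s).

(* [lift_perm j ord0 s] gives rank 0 to [j] and shifts the other ranks up by one. *)
Lemma rank_stat_lift_perm N (a : 'I_N.+1 -> R) j (s : 'S_N) :
  rank_stat a (lift_perm j ord0 s) = rank_stat (a \o lift j) s + \sum_k a (lift j k).
Proof.
rewrite /rank_stat (bigD1_ord j) //= lift_perm_id mulr0 add0r -big_split /=.
by apply: eq_bigr => k _; rewrite lift_perm_lift /= /bump leq0n add1n mulrSr mulrDr mulr1.
Qed.

Lemma perm_mgf_lift N (a : 'I_N.+1 -> R) h :
  perm_mgf a h = \sum_j expR (h * \sum_k a (lift j k)) * perm_mgf (a \o lift j) h.
Proof.
rewrite /perm_mgf sum_perm_lift; apply: eq_bigr => j _; rewrite mulr_sumr.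
by apply: eq_bigr => s _; rewrite rank_stat_lift_perm -expRD mulrDr addrC.
Qed.

Lemma sum_expR_pair_dev_le N (a : 'I_N.+1 -> R) b h : (forall i, `|a i| <= b) ->
  \sum_j expR (h / 2 * \sum_i (a i - a j)) <= N.+1%:R * expR ((h * b * N%:R) ^+ 2 / 2).
Proof.
move=> a_le_b.
have dev_le j : `|\sum_i (a i - a j)| <= 2 * b * N%:R.
  rewrite (bigD1_ord j) //= subrr add0r (le_trans (ler_norm_sum _ _ _)) //.
  apply: le_trans (_ : \sum_(i < N) (2 * b) <= _); last by rewrite sumr_const card_ord mulr_natr.
  apply: ler_sum => i _; rewrite (le_trans (ler_normB _ _)) //.
  by rewrite mulr2n mulrDl mul1r lerD.
apply: (le_trans (sum_expR_centered_le (M := `|h| * b * N%:R) _ _)).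
- move=> j; rewrite normrM normf_div [`|2|]ger0_norm //.
  apply: le_trans (ler_wpM2l _ (dev_le j)) _; first by rewrite divr_ge0.
  lra.
- rewrite -mulr_sumr; under eq_bigr do rewrite sumrB.
  by rewrite sumrB exchange_big subrr mulr0.
- by rewrite !exprMn real_normK ?num_real.
Qed.

Lemma perm_mgf_le N (a : 'I_N -> R) b h : (forall i, `|a i| <= b) ->
  perm_mgf a h <= N`!%:R * expR (h / 2 * (\sum_i a i) * (N%:R - 1)
                                 + (h * b) ^+ 2 / 2 * \sum_(m < N) m%:R ^+ 2).
Proof.
elim: N a => [|N IH] a a_le_b.
  rewrite /perm_mgf /rank_stat; under eq_bigr do rewrite big_ord0 mulr0 expR0.
  by rewrite sumr_const card_Sn !big_ord0 mulr0 mul0r add0r mulr0 expR0 mulr1.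
rewrite perm_mgf_lift.
apply: le_trans (ler_sum _ (fun j _ => ler_wpM2l (expR_ge0 _)
                                         (IH (a \o lift j) (fun k => a_le_b _)))) _.
set A := \sum_i a i; set K := (h * b) ^+ 2 / 2; set S := \sum_(m < N) m%:R ^+ 2.
have summand_eq j :
    expR (h * \sum_k a (lift j k)) *
      (N`!%:R * expR (h / 2 * (\sum_k a (lift j k)) * (N%:R - 1) + K * S))
  = N`!%:R * expR (h / 2 * A * N%:R + K * S) * expR (h / 2 * \sum_i (a i - a j)).
  have -> : \sum_k a (lift j k) = A - a j by rewrite /A (bigD1_ord j) //= addrC addrK.
  have -> : \sum_i (a i - a j) = A - a j * (N%:R + 1).
    by rewrite sumrB sumr_const card_ord natr1 mulr_natr.
  by rewrite mulrCA -[RHS]mulrA -!expRD; congr (_ * expR _); lra.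
under eq_bigr do rewrite summand_eq.
rewrite -mulr_sumr; apply: le_trans (ler_wpM2l _ (sum_expR_pair_dev_le h a_le_b)) _.
  by rewrite mulr_ge0 ?ler0n ?expR_ge0.
rewrite big_ord_recr /= -/S factS natrM.
have -> : h / 2 * A * (N.+1%:R - 1) + K * (S + N%:R ^+ 2)
        = h / 2 * A * N%:R + K * S + (h * b * N%:R) ^+ 2 / 2.
  by rewrite -[N.+1%:R]natr1 /K; lra.
by rewrite [X in _ <= _ * X]expRD mulrACA [N`!%:R * _]mulrC.
Qed.

Lemma sum_sqr_ord_le N : \sum_(m < N) (m%:R : R) ^+ 2 <= N%:R * (N%:R - 1) ^+ 2.
Proof.
apply: le_trans (_ : \sum_(m < N) (N%:R - 1) ^+ 2 <= _); last first.
  by rewrite sumr_const card_ord mulr_natl.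
apply: ler_sum => m _; have m_le : (m%:R : R) <= N%:R - 1.
  by rewrite lerBrDr natr1 ler_nat ltn_ord.
by rewrite lerXn2r ?nnegrE ?(le_trans (ler0n _ m)).
Qed.

Lemma card_rank_stat_ge N (a : 'I_N -> R) b lam v :
  \sum_i a i = 0 -> (forall i, `|a i| <= b) -> 0 <= lam -> 0 < v ->
  b ^+ 2 * \sum_(m < N) m%:R ^+ 2 <= v ->
  #|[set s : 'S_N | lam <= rank_stat a s]|%:R <= N`!%:R * expR (- lam ^+ 2 / (2 * v)).
Proof.
move=> sum_a0 a_le_b lam_ge0 v_gt0 var_le.
pose h := lam / v.
have h_ge0 : 0 <= h by rewrite /h divr_ge0 // ltW.
apply: le_trans (card_tail_le_sum_expR _ _ h_ge0) _.
have -> : \sum_s expR (h * (rank_stat a s - lam)) = expR (- (h * lam)) * perm_mgf a h.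
  by rewrite /perm_mgf mulr_sumr; apply: eq_bigr => s _; rewrite -expRD; congr expR; lra.
apply: le_trans (ler_wpM2l (expR_ge0 _) (perm_mgf_le h a_le_b)) _.
rewrite sum_a0 mulr0 mul0r add0r mulrCA -expRD ler_wpM2l ?ler0n // ler_expR.
have -> : (h * b) ^+ 2 / 2 * \sum_(m < N) m%:R ^+ 2
        = h ^+ 2 / 2 * (b ^+ 2 * \sum_(m < N) m%:R ^+ 2) by ring.
apply: le_trans (lerD (lexx _) (ler_wpM2l _ var_le)) _; first by rewrite divr_ge0 ?sqr_ge0.
suff -> : - (h * lam) + h ^+ 2 / 2 * v = - lam ^+ 2 / (2 * v) by [].
by rewrite /h; field; rewrite lt0r_neq0.
Qed.

Lemma rank_statN N (a : 'I_N -> R) s : rank_stat (fun i => - a i) s = - rank_stat a s.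
Proof. by rewrite /rank_stat -sumrN; apply: eq_bigr => i _; rewrite mulNr. Qed.

Lemma card_rank_stat_norm_ge N (a : 'I_N -> R) b lam v :
  \sum_i a i = 0 -> (forall i, `|a i| <= b) -> 0 <= lam -> 0 < v ->
  b ^+ 2 * \sum_(m < N) m%:R ^+ 2 <= v ->
  #|[set s : 'S_N | lam <= `|rank_stat a s|]|%:R
    <= 2 * N`!%:R * expR (- lam ^+ 2 / (2 * v)).
Proof.
move=> sum_a0 a_le_b lam_ge0 v_gt0 var_le.
have sum_Na0 : \sum_i - a i = 0 by rewrite sumrN sum_a0 oppr0.
have Na_le_b i : `|- a i| <= b by rewrite normrN.
set A := [set s : 'S_N | lam <= rank_stat a s].
set B := [set s : 'S_N | lam <= rank_stat (fun i => - a i) s].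
apply: (@le_trans _ _ (#|A| + #|B|)%N%:R).
  rewrite ler_nat (leq_trans _ (leq_card_setU _ _).1) // subset_leq_card //.
  by apply/subsetP => s; rewrite !inE rank_statN ler_normr.
have := card_rank_stat_ge sum_a0 a_le_b lam_ge0 v_gt0 var_le.
have := card_rank_stat_ge sum_Na0 Na_le_b lam_ge0 v_gt0 var_le.
by rewrite natrD -/A -/B; lra.
Qed.

Lemma card_bigcup_rank_stat_ge n p (X : 'M[R]_(n, p)) b lam v :
  (forall j, \sum_i X i j = 0) -> (forall i j, `|X i j| <= b) -> 0 <= lam -> 0 < v ->
  b ^+ 2 * \sum_(m < n) m%:R ^+ 2 <= v ->
  #|\bigcup_j [set s : 'S_n | lam <= `|rank_stat (fun i => X i j) s|]|%:R
    <= p%:R * (2 * n`!%:R * expR (- lam ^+ 2 / (2 * v))).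
Proof.
move=> sum_X0 X_le_b lam_ge0 v_gt0 var_le.
pose A j := [set s : 'S_n | lam <= `|rank_stat (fun i => X i j) s|].
apply: (@le_trans _ _ (\sum_j #|A j|)%N%:R); first by rewrite ler_nat card_bigcup_le.
rewrite natr_sum mulr_natl -[p in _ *+ p]card_ord -sumr_const; apply: ler_sum => j _.
exact: card_rank_stat_norm_ge (sum_X0 j) (X_le_b ^~ j) lam_ge0 v_gt0 var_le.
Qed.

End RankStatistic.

Section GroupNorms.
Variables (R : realType) (p g : nat) (grp : 'I_p -> 'I_g) (w : 'I_g -> R).
Hypothesis w_ge0 : forall l, 0 <= w l.
Implicit Type v : 'I_p -> R.

Lemma gnorm_le_sqrt_card v l :
  Defs.gnorm grp v l <= Num.sqrt #|[set j | grp j == l]|%:R * \big[Num.max/0]_j `|v j|.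
Proof.
set m := \big[Num.max/0]_j `|v j|.
have m_ge0 : 0 <= m by apply/bigmax_geP; left.
rewrite /gnorm -[m in X in _ <= X](ger0_norm m_ge0) -sqrtr_sqr -sqrtrM ?ler0n //.
rewrite ler_sqrt ?mulr_ge0 ?ler0n ?sqr_ge0 //.
apply: le_trans (_ : \sum_(j < p | grp j == l) m ^+ 2 <= _).
  apply: ler_sum => j _; rewrite -real_normK ?num_real //.
  by rewrite lerXn2r ?nnegrE ?normr_ge0 // (le_bigmax _ (fun j => `|v j|)).
by rewrite sumr_const mulr_natl cardsE.
Qed.

Lemma Psid_le_cp_max v : Psid grp w v <= cp grp w * \big[Num.max/0]_j `|v j|.
Proof.
set m := \big[Num.max/0]_j `|v j|.
have m_ge0 : 0 <= m by apply/bigmax_geP; left.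
have cp_ge0 : 0 <= cp grp w by apply/bigmax_geP; left.
apply/bigmax_leP; split => [|l _]; first exact: mulr_ge0.
rewrite mulrC (le_trans (ler_wpM2l _ (gnorm_le_sqrt_card v l))) ?invr_ge0 //.
by rewrite mulrA ler_wpM2r //; apply: le_bigmax.
Qed.

Lemma Psid_ge_coord v t : 0 < cp grp w -> 0 < t -> t <= Psid grp w v ->
  exists j, t / cp grp w <= `|v j|.
Proof.
move=> cp_gt0 t_gt0 /le_trans/(_ (Psid_le_cp_max v)).
rewrite [cp _ _ * _]mulrC -ler_pdivrMr // => /bigmax_geP[|[j _ le_j]]; last by exists j.
by rewrite leNgt divr_gt0.
Qed.
End GroupNorms.

Lemma Sn_rank_stat (R : realType) n p (X : 'M[R]_(n, p)) s j :
  \sum_i X i j = 0 -> Sn X s j = - (4 / (n%:R * (n%:R - 1))) * rank_stat (fun i => X i j) s.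
Proof.
move=> sum_X0; rewrite /Sn /rank_stat.
have -> : \sum_i X i j * xi R s i = \sum_i (2 * (X i j * (s i)%:R) + (1 - n%:R) * X i j).
  by apply: eq_bigr => i _; rewrite /xi; ring.
by rewrite big_split /= -!mulr_sumr sum_X0 mulr0 addr0 mulrA; congr (_ * _); ring.
Qed.

Theorem lemma3 (R : realType) (n p g : nat) (X : 'M[R]_(n, p))
    (grp : 'I_p -> 'I_g) (w : 'I_g -> R) (bstar : 'I_p -> R) (c0 b1 b2 : R) :
  (2 <= n)%N ->
  (forall l : 'I_g, exists j : 'I_p, grp j = l) ->
  (forall l : 'I_g, 0 < w l) ->
  1 < c0 -> 0 < b1 -> 0 < b2 ->
  assumption_A1 X grp w bstar c0 b1 b2 ->
  forall t : R, 0 < t ->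
    perm_prob R (fun s : 'S_n => t <= Psid grp w (Sn X s))
    <= 2 * p%:R * expR (- (n%:R * t ^+ 2) / (32 * b1 ^+ 2 * cp grp w ^+ 2)).
Proof.
move=> n_ge2 _ w_gt0 _ b1_gt0 _ [sum_X0 X_le_b1 _] t t_gt0.
have w_ge0 l : 0 <= w l by exact: ltW.
rewrite /perm_prob ler_pdivrMr ?ltr0n ?fact_gt0 //.
set E := [set s | _]; set c := cp grp w; set nn := n%:R.
have [c_le0 | c_gt0] := lerP c 0.
  suff -> : E = set0 by rewrite cards0 !mulr_ge0 ?ler0n ?expR_ge0.
  apply/setP => s; rewrite !inE lt_geF // (le_lt_trans (Psid_le_cp_max _ w_ge0 _)) //.
  by rewrite (le_lt_trans _ t_gt0) // mulr_le0_ge0 //; apply/bigmax_geP; left.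
have nn_gt1 : 1 < nn by rewrite ltr1n.
pose kap := 4 / (nn * (nn - 1)).
have kap_gt0 : 0 < kap by rewrite divr_gt0 // mulr_gt0; lra.
set lam := t / c / kap; set v := b1 ^+ 2 * (nn * (nn - 1) ^+ 2).
apply: (@le_trans _ _
  #|\bigcup_j [set s : 'S_n | lam <= `|rank_stat (fun i => X i j) s|]|%:R).
  rewrite ler_nat subset_leq_card //; apply/subsetP => s.
  rewrite inE => /(Psid_ge_coord w_ge0 c_gt0 t_gt0)[j].
  rewrite Sn_rank_stat // normrM normrN (gtr0_norm kap_gt0) [kap * _]mulrC.
  rewrite -ler_pdivrMr // => lam_le.
  by apply/bigcupP; exists j; rewrite ?inE.
have lam_ge0 : 0 <= lam := ltW (divr_gt0 (divr_gt0 t_gt0 c_gt0) kap_gt0).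
have v_gt0 : 0 < v by rewrite /v mulr_gt0 ?exprn_gt0 ?mulr_gt0 //; lra.
have var_le : b1 ^+ 2 * \sum_(m < n) m%:R ^+ 2 <= v.
  by rewrite /v ler_wpM2l ?sqr_ge0 ?sum_sqr_ord_le.
apply: le_trans (card_bigcup_rank_stat_ge sum_X0 X_le_b1 lam_ge0 v_gt0 var_le) _.
have -> : - lam ^+ 2 / (2 * v) = - (nn * t ^+ 2) / (32 * b1 ^+ 2 * c ^+ 2).
  by rewrite /lam /kap /v; field; rewrite ?lt0r_neq0 //; lra.
lra.
Qed.
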